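(* Let $A$ be an $n\times n$ decomposable generalized tournament matrix, let $I$ be a nontrivial clan of $A$, and let $x\in I$. Then $A$ is inseparable if and only if $A[([n]\setminus I)\cup\{x\}]$ is inseparable.
   Context: A generalized tournament matrix of order $n$ is a real $n\times n$ matrix $M=(m_{ij})$ with nonnegative entries satisfying $M+M^{t}=J_n-I_n$. Write $[n]=\{1,\ldots,n\}$; $M[Z]$ is the principal submatrix indexed by $Z$ (itself a generalized tournament matrix on index set $Z$). A clan of $M$ (with index set $V$) is a subset $X\subseteq V$ such that for all $i,j\in X$ and $k\in V\setminus X$, $m_{ik}=m_{jk}$ and $m_{ki}=m_{kj}$; the empty set, singletons and $V$ are trivial clans; $M$ is decomposable if it has a nontrivial clan. $M$ is separable if $V$ can be partitioned into two nonempty clans, and inseparable otherwise. *)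

From mathcomp Require Import all_boot all_order all_algebra.
Set Implicit Arguments. Unset Strict Implicit. Unset Printing Implicit Defensive.
Import Order.TTheory GRing.Theory Num.Theory.
Local Open Scope ring_scope.

(* A principal submatrix M[Z] is
   represented by the pair (M, Z): all notions below are relative to an
   index set V : {set 'I_n}, and "M[Z]" is M viewed on index set Z. *)

Definition gen_tournament (R : realFieldType) (n : nat) (M : 'M[R]_n) : Prop :=
  (forall i j, 0 <= M i j) /\ M + M^T = const_mx 1 - 1%:M.

Definition is_clan (R : realFieldType) (n : nat) (M : 'M[R]_n)
    (V X : {set 'I_n}) : Prop :=
  X \subset V /\
  forall i j k, i \in X -> j \in X -> k \in V :\: X ->
    M i k = M j k /\ M k i = M k j.

Definition trivial_subset (n : nat) (V X : {set 'I_n}) : Prop :=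
  X = set0 \/ (exists x, X = [set x]) \/ X = V.

Definition nontrivial_clan (R : realFieldType) (n : nat) (M : 'M[R]_n)
    (V X : {set 'I_n}) : Prop :=
  is_clan M V X /\ ~ trivial_subset V X.

Definition decomposable (R : realFieldType) (n : nat) (M : 'M[R]_n)
    (V : {set 'I_n}) : Prop :=
  exists X, nontrivial_clan M V X.

Definition separable (R : realFieldType) (n : nat) (M : 'M[R]_n)
    (V : {set 'I_n}) : Prop :=
  exists X Y : {set 'I_n},
    [/\ X != set0, Y != set0, X :&: Y = set0 & X :|: Y = V] /\
    (is_clan M V X /\ is_clan M V Y).

Definition inseparable (R : realFieldType) (n : nat) (M : 'M[R]_n)
    (V : {set 'I_n}) : Prop := ~ separable M V.

From mathcomp Require Import all_boot all_order all_algebra.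
Set Implicit Arguments.
Unset Strict Implicit.
Local Open Scope ring_scope.

(* In W := (V \ I) u {x} the clan I is represented by its point x alone.  A
   bipartition of W into clans lifts to V by adding I to the part containing x.
   Conversely, a bipartition {X, Y} of V into clans restricts to W unless one
   part, say X, misses W and so lies in I \ {x}.  Then, for i outside I, the
   entries between i and I are those between i and a fixed point of X, which
   do not depend on i as V \ I lies in Y: so V \ I is a clan of V, and {x},
   V \ I bipartition W. *)

Section Clans.
Variables (R : realFieldType) (n : nat) (A : 'M[R]_n).

Definition clan_bipartition (V X Y : {set 'I_n}) : Prop :=
  [/\ X != set0, Y != set0, X :&: Y = set0 & X :|: Y = V] /\
  (is_clan A V X /\ is_clan A V Y).

Lemma clan_bipartitionC (V X Y : {set 'I_n}) :
  clan_bipartition V X Y -> clan_bipartition V Y X.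
Proof. by move=> [[nX nY dXY uXY] [cX cY]]; rewrite /clan_bipartition setIC setUC. Qed.

Lemma clan_set1 (V : {set 'I_n}) x : x \in V -> is_clan A V [set x].
Proof. by move=> xV; split=> [|i j k /set1P -> /set1P ->]; rewrite ?sub1set. Qed.

Lemma clan_setI (V W X : {set 'I_n}) :
  W \subset V -> is_clan A V X -> is_clan A W (X :&: W).
Proof.
move=> sWV [_ cX]; split=> [|i j k /setIP [iX _] /setIP [jX _] /setDP [kW kXW]].
  exact: subsetIr.
apply: cX => //; rewrite inE (subsetP sWV) // andbT.
by apply: contra kXW => kX; rewrite inE kX.
Qed.

Lemma clan_bipartition_setI (V W X Y : {set 'I_n}) : W \subset V ->
  clan_bipartition V X Y -> X :&: W != set0 -> Y :&: W != set0 ->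
  clan_bipartition W (X :&: W) (Y :&: W).
Proof.
move=> sWV [[_ _ dXY uXY] [cX cY]] nXW nYW; split; split=> //.
- by rewrite setIACA dXY set0I.
- by rewrite -setIUl uXY; apply/setIidPr.
- exact: clan_setI sWV _.
- exact: clan_setI sWV _.
Qed.

Lemma clan_setD (V I Y : {set 'I_n}) i0 : is_clan A V I -> is_clan A V Y ->
  V :\: I \subset Y -> i0 \in V :\: Y -> is_clan A V (V :\: I).
Proof.
move=> [_ cI] [_ cY] sDY i0D; split=> [|i j k iD jD]; first exact: subsetDl.
have i0I : i0 \in I.
  move: i0D; rewrite inE => /andP [i0Y i0V]; apply: contraR i0Y => i0I.
  by apply: (subsetP sDY); rewrite inE i0I.
move=> /setDP [kV]; rewrite inE kV andbT negbK => kI.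
have [-> ->] := cI k i0 i kI i0I iD.
have [-> ->] := cI k i0 j kI i0I jD.
exact: cY (subsetP sDY i iD) (subsetP sDY j jD) i0D.
Qed.

End Clans.

Section CollapsedClan.
Variables (R : realFieldType) (n : nat) (A : 'M[R]_n).
Variables (V I : {set 'I_n}) (x : 'I_n).
Hypotheses (clI : is_clan A V I) (xI : x \in I).

Let W := V :\: I :|: [set x].

Let sIV : I \subset V. Proof. by case: clI. Qed.

Let sWV : W \subset V.
Proof. by rewrite subUset subsetDl sub1set (subsetP sIV). Qed.

Let collapsed_notin_sub (Y : {set 'I_n}) :
  Y \subset W -> x \notin Y -> Y \subset V :\: I.
Proof.
move=> sYW xY; apply/subsetP => i iY; move: (subsetP sYW i iY); rewrite !inE.
by case/orP => // /eqP ix; move: xY; rewrite -ix iY.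
Qed.

Lemma collapsed_clan_setU X : is_clan A W X -> x \in X -> is_clan A V (X :|: I).
Proof.
move=> [sXW cX] xX; have [_ cI] := clI.
split=> [|i j k]; first by rewrite subUset sIV (subset_trans sXW sWV).
suff agree l : l \in X :|: I -> k \in V :\: (X :|: I) ->
    A l k = A x k /\ A k l = A k x.
  by move=> iXI jXI kD; have [-> ->] := agree i iXI kD; have [-> ->] := agree j jXI kD.
move=> lXI /setDP [kV]; rewrite inE negb_or => /andP [kX kI].
case/setUP: lXI => [lX|lI]; first by apply: cX => //; rewrite !inE kX kI kV.
by apply: cI => //; rewrite !inE kI kV.
Qed.

Lemma collapsed_clan_notin Y : is_clan A W Y -> x \notin Y -> is_clan A V Y.
Proof.
move=> [sYW cY] xY; have [_ cI] := clI.
have sYD := collapsed_notin_sub sYW xY.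
split=> [|i j k iY jY /setDP [kV kY]]; first exact: subset_trans sYD (subsetDl _ _).
have [kW | kW] := boolP (k \in W); first by apply: cY => //; rewrite inE kY kW.
have kI : k \in I by move: kW; rewrite !inE kV andbT negb_or negbK => /andP [].
have xWY : x \in W :\: Y by rewrite !inE xY eqxx orbT.
have [-> ->] := cI k x i kI xI (subsetP sYD i iY).
have [-> ->] := cI k x j kI xI (subsetP sYD j jY).
exact: cY.
Qed.

Lemma clan_bipartition_uncollapse X Y :
  clan_bipartition A W X Y -> x \in X -> clan_bipartition A V (X :|: I) Y.
Proof.
move=> [[_ nY dXY uXY] [cX cY]] xX.
have xY : x \notin Y by move/setP/(_ x): dXY; rewrite !inE xX /= => ->.
have sYD : Y \subset V :\: I by rewrite collapsed_notin_sub // -uXY subsetUr.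
split; split=> //.
- by apply/set0Pn; exists x; rewrite inE xX.
- rewrite setIUl dXY set0U; apply/eqP; rewrite setI_eq0.
  by apply: disjointWr sYD _; rewrite -setI_eq0 setIDA setDIl setDv set0I.
- rewrite setUAC uXY setUAC (setUC _ I) -{1}(setIidPr sIV) setID.
  by apply/setUidPl; rewrite sub1set (subsetP sIV).
- exact: collapsed_clan_setU.
- exact: collapsed_clan_notin.
Qed.

Lemma separable_uncollapse : separable A W -> separable A V.
Proof.
have xW : x \in W by rewrite !inE eqxx orbT.
move=> [X [Y bip]]; have [[_ _ _ uXY] _] := bip.
move: xW; rewrite -uXY => /setUP [xX | xY].
  by exists (X :|: I), Y; apply: clan_bipartition_uncollapse.
exists (Y :|: I), X.
exact: clan_bipartition_uncollapse (clan_bipartitionC bip) xY.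
Qed.

Lemma clan_bipartition_collapse X Y : V :\: I != set0 ->
  clan_bipartition A V X Y -> X :&: W = set0 ->
  clan_bipartition A W [set x] (V :\: I).
Proof.
move=> nD [[nX _ dXY uXY] [_ cY]] dXW.
have [i0 i0X] := set0Pn _ nX.
have i0VY : i0 \in V :\: Y.
  rewrite inE -uXY inE i0X andbT; apply/negP => i0Y.
  by move/setP/(_ i0): dXY; rewrite !inE i0X i0Y.
have sDY : V :\: I \subset Y.
  apply/subsetP => k kD; have : k \in V by case/setDP: kD.
  rewrite -uXY => /setUP [kX | //].
  have kW : k \in W by apply/setUP; left.
  by move/setP/(_ k): dXW; rewrite in_setI kX kW in_set0.
have sDW : V :\: I \subset W by exact: subsetUl.
split; split.
- by apply/set0Pn; exists x; rewrite inE.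
- exact: nD.
- by apply/setP => k; rewrite !inE; case: eqP => // ->; rewrite xI.
- exact: setUC.
- by apply: clan_set1; rewrite !inE eqxx orbT.
- by rewrite -(setIidPl sDW); apply: clan_setI sWV (clan_setD clI _ sDY i0VY).
Qed.

Lemma separable_collapse : V :\: I != set0 -> separable A V -> separable A W.
Proof.
move=> nD [X [Y bip]].
have [dXW | nXW] := eqVneq (X :&: W) set0.
  by exists [set x], (V :\: I); apply: clan_bipartition_collapse bip dXW.
have [dYW | nYW] := eqVneq (Y :&: W) set0.
  exists [set x], (V :\: I).
  exact: clan_bipartition_collapse (clan_bipartitionC bip) dYW.
by exists (X :&: W), (Y :&: W); exact: clan_bipartition_setI sWV bip nXW nYW.
Qed.

End CollapsedClan.

Theorem lemma5p4 (R : realFieldType) (n : nat) (A : 'M[R]_n)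
    (I : {set 'I_n}) (x : 'I_n) :
  gen_tournament A ->
  decomposable A [set: 'I_n] ->
  nontrivial_clan A [set: 'I_n] I ->
  x \in I ->
  (inseparable A [set: 'I_n] <-> inseparable A (~: I :|: [set x])).
Proof.
move=> _ _ [clI ntI] xI; rewrite -setTD.
have nD : [set: 'I_n] :\: I != set0.
  rewrite setTD; apply/negP => /eqP nI; apply: ntI; right; right.
  by rewrite -[I]setCK nI setC0.
split=> insep sep; apply: insep.
  exact: separable_uncollapse clI xI sep.
exact: separable_collapse clI xI nD sep.
Qed.
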